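(* Let $X=\{x=(x_{i,j,k})\in\mathbb{F}_2^{\mathbb{Z}^3}: x_{i,j,k}+x_{i+1,j,k}+x_{i,j+1,k}=0\text{ for all }(i,j,k)\in\mathbb{Z}^3\}$ and let $\alpha$ be the $\mathbb{Z}^3$-action on $X$ by shifts, $(\alpha^{\mathbf{n}}x)_{\mathbf{m}}=x_{\mathbf{m}+\mathbf{n}}$. Then the upper growth rate of periodic points is $\mathsf{g}(\alpha)=\frac23\log2$; in particular $\zeta_\alpha$ has radius of convergence $2^{-2/3}$.
   Context: $\mathcal{L}_3$ is the set of finite-index subgroups of $\mathbb{Z}^3$, $[\Lambda]=|\mathbb{Z}^3/\Lambda|$, $\mathsf{F}_\alpha(\Lambda)$ is the number of $x\in X$ fixed by all $\alpha^{\mathbf{n}}$, $\mathbf{n}\in\Lambda$, $\mathsf{g}(\alpha)=\limsup_{[\Lambda]\to\infty}\frac{1}{[\Lambda]}\log\mathsf{F}_\alpha(\Lambda)$, and $\zeta_\alpha(z)=\exp\left(\sum_{\Lambda\in\mathcal{L}_3}\frac{\mathsf{F}_\alpha(\Lambda)}{[\Lambda]}z^{[\Lambda]}\right)$. *)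

From Stdlib Require Import Reals ZArith List.
Import ListNotations.
Open Scope R_scope.

Definition Z3 : Type := (Z * Z * Z)%type.
Definition z3add (m n : Z3) : Z3 :=
  match m, n with (a, b, c), (d, e, f) => ((a + d)%Z, (b + e)%Z, (c + f)%Z) end.
Definition z3opp (m : Z3) : Z3 :=
  match m with (a, b, c) => ((- a)%Z, (- b)%Z, (- c)%Z) end.
Definition z3sub (m n : Z3) : Z3 := z3add m (z3opp n).

(* A subset of Z^3 is given by its (boolean) indicator; finite-index subgroups
   are decidable, so this loses nothing, and with functional extensionality
   extensionally equal subgroups are equal. *)
Definition is_subgroup (L : Z3 -> bool) : Prop :=
  L (0%Z, 0%Z, 0%Z) = true /\
  (forall m n, L m = true -> L n = true -> L (z3add m n) = true) /\
  (forall m, L m = true -> L (z3opp m) = true).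

Definition has_index (L : Z3 -> bool) (n : nat) : Prop :=
  exists reps : list Z3,
    length reps = n /\
    (forall i j, (i < n)%nat -> (j < n)%nat ->
        L (z3sub (nth i reps (0%Z,0%Z,0%Z)) (nth j reps (0%Z,0%Z,0%Z))) = true -> i = j) /\
    (forall m, exists r, In r reps /\ L (z3sub m r) = true).

Definition inL3 (L : Z3 -> bool) : Prop := is_subgroup L /\ exists n, has_index L n.

Definition has_card {T : Type} (S : T -> Prop) (k : nat) : Prop :=
  exists l : list T, NoDup l /\ length l = k /\ forall x, S x <-> In x l.

(* The subshift X ⊂ F_2^{Z^3} (F_2 = bool, + = xorb). *)
Definition inX (x : Z3 -> bool) : Prop :=
  forall i j k : Z,
    xorb (xorb (x (i, j, k)) (x ((i + 1)%Z, j, k))) (x (i, (j + 1)%Z, k)) = false.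

(* x is fixed by every shift alpha^n, n in L: (alpha^n x)_m = x_{m+n}. *)
Definition fixed_by (L : Z3 -> bool) (x : Z3 -> bool) : Prop :=
  forall n, L n = true -> forall m, x (z3add m n) = x m.

Definition Fcount (L : Z3 -> bool) (k : nat) : Prop :=
  has_card (fun x => inX x /\ fixed_by L x) k.

(* Coefficient of z^n in log zeta: c = sum_{L in L_3, [L] = n} F(L)/[L]. *)
Definition zcoef (n : nat) (c : R) : Prop :=
  exists l : list ((Z3 -> bool) * nat),
    NoDup (map fst l) /\
    (forall L, (inL3 L /\ has_index L n) <-> In L (map fst l)) /\
    (forall p, In p l -> Fcount (fst p) (snd p)) /\
    c = fold_right (fun p s => INR (snd p) / INR n + s) 0 l.

(* Coefficients of exp(sum_{n>=1} a_n z^n): b_0 = 1,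
   b_m = (1/m) sum_{k=1}^m k a_k b_{m-k}.  expc_list a n = [b_n; ...; b_0]. *)
Fixpoint expc_list (a : nat -> R) (n : nat) : list R :=
  match n with
  | O => [1]
  | S n' =>
      let prev := expc_list a n' in
      (sum_f_R0 (fun j => INR (S j) * a (S j) * nth j prev 0) n' / INR (S n'))
        :: prev
  end.
Definition expc (a : nat -> R) (n : nat) : R := hd 0 (expc_list a n).

Definition is_radius (b : nat -> R) (rad : R) : Prop :=
  0 <= rad /\
  (forall r, 0 <= r < rad ->
     exists s, Un_cv (fun N => sum_f_R0 (fun n => Rabs (b n) * r ^ n) N) s) /\
  (forall r, rad < r -> ~ exists M, forall n, Rabs (b n) * r ^ n <= M).

(* A point of X fixed by a subgroup L of index n is determined by its values on n coset
   representatives, and the relation x_r = x_(r+e1) + x_(r+e2) expresses each value through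
   at most two others (unless e1 or e2 lies in L, when x = 0).  Greedily eliminating
   dependent coordinates, three at a time, leaves at most 2n/3 free ones, so
   F(L) <= 2^(2n/3).  The subgroups {(a,b,c) : 3 | a - b, m | c} of index 3m have at least
   4^m = 2^(2/3 * 3m) fixed points, hence g = (2/3) log 2.

   For the zeta function, every subgroup of index n has a triangular basis
   (a,0,0), (b,c,0), (d,e,f) with entries at most n, so there are at most (n+1)^6 of them.
   The coefficients a_n of log zeta therefore satisfy n a_n <= (n+1)^6 2^(2n/3) and
   a_(3m) >= 4^m / (3m); the recursion for the coefficients of exp (sum a_n z^n) transfers
   the first bound to every exponential rate above 2^(2/3), and the second shows that no
   rate below it suffices. *)

From Stdlib Require Import Reals ZArith List Lia Lra Classical ClassicalEpsilon FunctionalExtensionality.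
Import ListNotations.
Open Scope R_scope.

Fixpoint find_index {T} (p : T -> bool) (l : list T) : nat :=
  match l with [] => 0%nat | a :: l' => if p a then 0%nat else S (find_index p l') end.

Lemma find_index_spec {T} (p : T -> bool) (l : list T) d :
  (exists r, In r l /\ p r = true) ->
  (find_index p l < length l)%nat /\ p (nth (find_index p l) l d) = true.
Proof.
  induction l as [|a l IH]; simpl; intros [r [Hr Hp]]; [contradiction|].
  destruct (p a) eqn:E; [split; [lia|exact E]|].
  destruct Hr as [<-|Hr]; [congruence|].
  destruct IH as [H1 H2]; [eauto|]. split; [lia|exact H2].
Qed.

Fixpoint bool_lists (p : nat) : list (list bool) :=
  match p with
  | O => [[]]
  | S p' => map (cons true) (bool_lists p') ++ map (cons false) (bool_lists p')
  end.

Lemma length_bool_lists p : length (bool_lists p) = (2 ^ p)%nat.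
Proof. induction p; simpl; [reflexivity|]. rewrite length_app, !length_map, IHp. lia. Qed.

Lemma in_bool_lists p l : In l (bool_lists p) <-> length l = p.
Proof.
  revert l; induction p as [|p IH]; intros l; simpl.
  - split; [intros [<-|[]]; reflexivity|destruct l; [auto|discriminate]].
  - rewrite in_app_iff, !in_map_iff. split.
    + intros [[l' [<- H]]|[l' [<- H]]]; simpl; f_equal; apply IH, H.
    + destruct l as [|b l]; [discriminate|]. intros [= Hl].
      destruct b; [left|right]; exists l; split; auto; apply IH, Hl.
Qed.

Lemma NoDup_bool_lists p : NoDup (bool_lists p).
Proof.
  induction p; simpl; [repeat constructor; intros []|].
  apply NoDup_app.
  - apply NoDup_map_NoDup_ForallPairs; [intros x y _ _ [=]; auto|exact IHp].
  - apply NoDup_map_NoDup_ForallPairs; [intros x y _ _ [=]; auto|exact IHp].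
  - intros l H1 H2. apply in_map_iff in H1, H2.
    destruct H1 as [x [<- _]], H2 as [y [H _]]. discriminate.
Qed.

Lemma NoDup_list_prod {A B} (l : list A) (l' : list B) :
  NoDup l -> NoDup l' -> NoDup (list_prod l l').
Proof.
  induction l as [|a l IH]; intros H1 H2; simpl; [constructor|]. inversion H1; subst.
  apply NoDup_app.
  - apply NoDup_map_NoDup_ForallPairs; [intros x y _ _ [=]; auto|exact H2].
  - apply IH; assumption.
  - intros [x y] Ha Hb. apply in_map_iff in Ha. destruct Ha as [z [[= <- _] _]].
    apply in_prod_iff in Hb. tauto.
Qed.

Lemma has_card_incl {T} (l : list T) (P : T -> Prop) :
  (forall x, P x -> In x l) -> exists k, has_card P k.
Proof.
  revert P; induction l as [|a l IH]; intros P HS.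
  - exists 0%nat, []. repeat split; [constructor|intros H; apply HS in H; contradiction|intros []].
  - destruct (IH (fun x => P x /\ x <> a)) as [k [l' [H1 [H2 H3]]]].
    { intros x [Hx Hne]. destruct (HS x Hx) as [->|H]; [congruence|exact H]. }
    destruct (classic (P a)) as [Ha|Ha].
    + exists (S k), (a :: l'). split; [constructor; [rewrite <- H3; tauto|exact H1]|].
      split; [simpl; lia|]. intros x. simpl. rewrite <- H3.
      destruct (classic (x = a)) as [->|Hne]; [tauto|].
      split; [intros Hx; right; tauto|intros [<-|[Hx _]]; assumption].
    + exists k, l'. split; [exact H1|]. split; [exact H2|]. intros x. rewrite <- H3.
      split; [intros Hx; split; [exact Hx|intros ->; contradiction]|tauto].
Qed.

Lemma has_card_ge {T} (S : T -> Prop) k (l : list T) :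
  has_card S k -> NoDup l -> (forall x, In x l -> S x) -> (length l <= k)%nat.
Proof.
  intros [l' [H1 [<- H3]]] Hn Hs. apply NoDup_incl_length; [exact Hn|].
  intros x Hx. apply H3, Hs, Hx.
Qed.

Lemma has_card_le_pow2 {T} (S : T -> Prop) k (code : T -> list bool) p :
  has_card S k -> (forall x, S x -> length (code x) = p) ->
  (forall x y, S x -> S y -> code x = code y -> x = y) -> (k <= 2 ^ p)%nat.
Proof.
  intros [l [H1 [<- H3]]] Hlen Hinj. rewrite <- length_bool_lists, <- (length_map code l).
  apply NoDup_incl_length.
  - apply NoDup_map_NoDup_ForallPairs; [|exact H1].
    intros x y Hx Hy; apply Hinj; apply H3; assumption.
  - intros z Hz. apply in_map_iff in Hz. destruct Hz as [x [<- Hx]].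
    apply in_bool_lists, Hlen, H3, Hx.
Qed.

Lemma NoDup_lt_length n l : NoDup l -> (forall x, In x l -> (x < n)%nat) -> (length l <= n)%nat.
Proof.
  intros Hl Hn. rewrite <- (length_seq n 0). apply NoDup_incl_length; [exact Hl|].
  intros x Hx. apply in_seq. specialize (Hn x Hx). lia.
Qed.

Lemma pigeonhole_nat n (h : nat -> nat) : (forall i, (i <= n)%nat -> (h i < n)%nat) ->
  exists i j, (i < j <= n)%nat /\ h i = h j.
Proof.
  intros Hh. apply NNPP. intros Hno.
  assert (HND : NoDup (map h (seq 0 (S n)))).
  { apply NoDup_map_NoDup_ForallPairs; [|apply seq_NoDup]. intros x y Hx Hy Hxy.
    apply in_seq in Hx, Hy. destruct (Nat.lt_total x y) as [Hl|[Hl|Hl]]; [|exact Hl|];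
    exfalso; apply Hno; [exists x, y|exists y, x]; split; auto; lia. }
  apply (NoDup_lt_length n) in HND; [rewrite length_map, length_seq in HND; lia|].
  intros z Hz. apply in_map_iff in Hz. destruct Hz as [x [<- Hx]]. apply in_seq in Hx. apply Hh. lia.
Qed.

(** * Greedy elimination of dependent coordinates *)

Definition agree_on {X} (v : X -> nat -> bool) (x y : X) (D : nat -> Prop) : Prop :=
  forall c, D c -> v x c = v y c.

Section Greedy.
Variables (X : Type) (n : nat) (P : X -> Prop) (v : X -> nat -> bool).

Hypothesis depends_on_two : forall j, (j < n)%nat -> exists t, (length t <= 2)%nat /\
  ~ In j t /\ (forall z, In z t -> (z < n)%nat) /\
  forall x y, P x -> P y -> agree_on v x y (fun z => In z t) -> v x j = v y j.

(* [Q] are the pivots chosen so far, [C] the coordinates they control. *)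
Definition greedy_invariant (Q C : list nat) : Prop :=
  NoDup Q /\ incl Q C /\ (forall c, In c C -> (c < n)%nat) /\ (length C <= 3 * length Q)%nat /\
  forall x y, P x -> P y ->
    agree_on v x y (fun c => In c C /\ ~ In c Q) -> agree_on v x y (fun c => In c C).

Lemma greedy_invariant_step Q C j : greedy_invariant Q C -> (j < n)%nat -> ~ In j C ->
  exists C', greedy_invariant (j :: Q) C'.
Proof.
  intros [HQ [HQC [HCn [Hlen Hdet]]]] Hj HjC.
  destruct (depends_on_two j Hj) as [t [Ht [Hjt [Htn Htdet]]]].
  exists (j :: t ++ C). split; [constructor; [intros Hq; apply HjC, HQC, Hq|exact HQ]|].
  split; [intros q [<-|Hq]; [left|right; apply in_or_app; right; apply HQC]; auto|].
  split; [intros c [<-|Hc]; [exact Hj|apply in_app_or in Hc; destruct Hc; auto]|].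
  split; [simpl; rewrite length_app; lia|].
  intros x y Hx Hy Hag.
  assert (HC : agree_on v x y (fun c => In c C)).
  { apply Hdet; [exact Hx|exact Hy|]. intros c [Hc Hq]. apply Hag.
    split; [right; apply in_or_app; right; exact Hc|intros [<-|Hq']; contradiction]. }
  assert (Hfresh : forall c, In c t -> ~ In c C -> v x c = v y c).
  { intros c Hc HcC. apply Hag. split; [right; apply in_or_app; left; exact Hc|].
    intros [<-|Hq]; [contradiction|apply HcC, HQC, Hq]. }
  assert (Ht' : agree_on v x y (fun c => In c t)).
  { intros c Hc. destruct (In_dec Nat.eq_dec c C); [apply HC|apply Hfresh]; assumption. }
  intros c [<-|Hc]; [apply Htdet; assumption|].
  apply in_app_or in Hc. destruct Hc as [Hc|Hc]; [apply Ht'|apply HC]; exact Hc.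
Qed.

Lemma greedy_terminates Q C : greedy_invariant Q C ->
  exists Q' C', greedy_invariant Q' C' /\ forall j, (j < n)%nat -> In j C'.
Proof.
  remember (n - length Q)%nat as k eqn:Hk. revert Q C Hk.
  induction k as [k IH] using (well_founded_induction lt_wf). intros Q C Hk HI.
  destruct (classic (forall j, (j < n)%nat -> In j C)) as [Hall|Hnot]; [exists Q, C; auto|].
  apply not_all_ex_not in Hnot. destruct Hnot as [j Hj]. apply imply_to_and in Hj.
  destruct Hj as [Hjn HjC]. destruct (greedy_invariant_step Q C j HI Hjn HjC) as [C' HI'].
  apply (IH (n - length (j :: Q))%nat) with (Q := j :: Q) (C := C'); [|reflexivity|exact HI'].
  destruct HI' as [HQ' [HQC' [HCn' _]]].
  pose proof (NoDup_lt_length n (j :: Q) HQ' (fun q Hq => HCn' q (HQC' q Hq))).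
  simpl in *. lia.
Qed.

Lemma few_free_coordinates : exists F, (3 * length F <= 2 * n)%nat /\
  forall x y, P x -> P y -> agree_on v x y (fun j => In j F) -> agree_on v x y (fun j => (j < n)%nat).
Proof.
  destruct (greedy_terminates [] []) as [Q [C [[HQ [HQC [HCn [Hlen Hdet]]]] Hall]]].
  { repeat split; [constructor|intros q []|intros c []|simpl; lia|intros x y _ _ _ c []]. }
  set (F := filter (fun j => if In_dec Nat.eq_dec j Q then false else true) (seq 0 n)).
  assert (HF : forall j, In j F <-> (j < n)%nat /\ ~ In j Q).
  { intros j. unfold F. rewrite filter_In, in_seq.
    destruct (In_dec Nat.eq_dec j Q); intuition (try discriminate; lia). }
  exists F. split.
  - assert (HnC : (n <= length C)%nat).
    { rewrite <- (length_seq n 0). apply NoDup_incl_length; [apply seq_NoDup|].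
      intros j Hj. apply in_seq in Hj. apply Hall. lia. }
    assert (HFQ : (length F + length Q <= n)%nat).
    { rewrite <- length_app, <- (length_seq n 0). apply NoDup_incl_length.
      - apply NoDup_app; [apply NoDup_filter, seq_NoDup|exact HQ|].
        intros j Hj HjQ. apply HF in Hj. tauto.
      - intros j Hj. apply in_seq. apply in_app_or in Hj.
        destruct Hj as [Hj|Hj]; [apply HF in Hj|apply HQC, HCn in Hj]; lia. }
    lia.
  - intros x y Hx Hy Hag j Hj. apply Hdet; [exact Hx|exact Hy| |apply Hall, Hj].
    intros c [Hc Hq]. apply Hag, HF. split; [apply HCn, Hc|exact Hq].
Qed.

End Greedy.

(** * Periodic points of a finite-index subgroup *)

Definition origin : Z3 := (0%Z, 0%Z, 0%Z).
Definition e1 : Z3 := (1%Z, 0%Z, 0%Z).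
Definition e2 : Z3 := (0%Z, 1%Z, 0%Z).
Definition e3 : Z3 := (0%Z, 0%Z, 1%Z).

Definition z3scale (k : Z) (v : Z3) : Z3 :=
  match v with (a, b, c) => ((k * a)%Z, (k * b)%Z, (k * c)%Z) end.

Ltac z3ring := repeat match goal with m : Z3 |- _ => destruct m as [[? ?] ?] end;
  unfold origin, e1, e2, e3, z3scale, z3sub, z3add, z3opp; simpl;
  apply pair_equal_spec; split; [apply pair_equal_spec; split|]; ring.

Lemma z3add_sub_cancel_l r v : z3sub (z3add r v) r = v.
Proof. z3ring. Qed.

Section Subgroup.
Variable L : Z3 -> bool.
Hypothesis HL : is_subgroup L.

Lemma subgroup_add u v : L u = true -> L v = true -> L (z3add u v) = true.
Proof. apply HL. Qed.

Lemma subgroup_sub u v : L u = true -> L v = true -> L (z3sub u v) = true.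
Proof. intros Hu Hv. apply subgroup_add; [exact Hu|apply HL, Hv]. Qed.

Lemma subgroup_scale k v : L v = true -> L (z3scale k v) = true.
Proof.
  intros Hv.
  assert (Hnat : forall k : nat, L (z3scale (Z.of_nat k) v) = true).
  { induction k0 as [|k0 IH].
    - replace (z3scale (Z.of_nat 0) v) with origin by z3ring. apply HL.
    - replace (z3scale (Z.of_nat (S k0)) v) with (z3add (z3scale (Z.of_nat k0) v) v)
        by (rewrite Nat2Z.inj_succ; z3ring). apply subgroup_add; assumption. }
  destruct (Z_le_gt_dec 0 k) as [Hk|Hk].
  - rewrite <- (Z2Nat.id k Hk). apply Hnat.
  - replace (z3scale k v) with (z3opp (z3scale (Z.of_nat (Z.to_nat (- k))) v))
      by (rewrite Z2Nat.id by lia; z3ring). apply HL, Hnat.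
Qed.

Lemma subgroup_add_scale u k v : L u = true -> L v = true -> L (z3add u (z3scale k v)) = true.
Proof. intros Hu Hv. apply subgroup_add; [exact Hu|apply subgroup_scale, Hv]. Qed.

End Subgroup.

Lemma fixed_by_coset L x m r : fixed_by L x -> L (z3sub m r) = true -> x m = x r.
Proof. intros Hx H. rewrite <- (Hx _ H r). f_equal. z3ring. Qed.

Lemma fixed_point_vanishes L x m : L e1 = true \/ L e2 = true -> inX x -> fixed_by L x -> x m = false.
Proof.
  intros He HX Hx. destruct m as [[i j] k]. destruct He as [He|He].
  - specialize (HX i (j - 1)%Z k).
    rewrite (fixed_by_coset L x ((i + 1)%Z, (j - 1)%Z, k) (i, (j - 1)%Z, k) Hx) in HX
      by (replace (z3sub _ _) with e1 by z3ring; exact He).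
    replace (j - 1 + 1)%Z with j in HX by lia.
    destruct (x (i, (j - 1)%Z, k)), (x (i, j, k)); simpl in *; congruence.
  - specialize (HX (i - 1)%Z j k).
    rewrite (fixed_by_coset L x ((i - 1)%Z, (j + 1)%Z, k) ((i - 1)%Z, j, k) Hx) in HX
      by (replace (z3sub _ _) with e2 by z3ring; exact He).
    replace (i - 1 + 1)%Z with i in HX by lia.
    destruct (x ((i - 1)%Z, j, k)), (x (i, j, k)); simpl in *; congruence.
Qed.

Lemma inX_xorb x m : inX x -> x m = xorb (x (z3add m e1)) (x (z3add m e2)).
Proof.
  intros HX. destruct m as [[i j] k]. specialize (HX i j k). simpl. rewrite !Z.add_0_r.
  destruct (x (i, j, k)), (x ((i + 1)%Z, j, k)), (x (i, (j + 1)%Z, k)); simpl in *; congruence.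
Qed.

Section Cosets.
Variables (L : Z3 -> bool) (n : nat) (reps : list Z3).
Hypothesis HL : is_subgroup L.
Hypothesis Hlen : length reps = n.
Hypothesis Hcov : forall m, exists r, In r reps /\ L (z3sub m r) = true.

Definition coset_index (m : Z3) : nat := find_index (fun r => L (z3sub m r)) reps.

Lemma coset_index_spec m :
  (coset_index m < n)%nat /\ L (z3sub m (nth (coset_index m) reps origin)) = true.
Proof. rewrite <- Hlen. apply (find_index_spec (fun r => L (z3sub m r)) reps origin (Hcov m)). Qed.

Lemma subgroup_multiple_in v : exists d : nat, (1 <= d <= n)%nat /\ L (z3scale (Z.of_nat d) v) = true.
Proof.
  destruct (pigeonhole_nat n (fun i => coset_index (z3scale (Z.of_nat i) v))) as [i [j [Hij Hh]]].
  { intros i _. apply coset_index_spec. }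
  exists (j - i)%nat. split; [lia|].
  destruct (coset_index_spec (z3scale (Z.of_nat i) v)) as [_ Hi].
  destruct (coset_index_spec (z3scale (Z.of_nat j) v)) as [_ Hj].
  simpl in Hh. rewrite Hh in Hi. set (r := nth _ reps origin) in Hi, Hj. clearbody r.
  replace (z3scale (Z.of_nat (j - i)) v)
    with (z3sub (z3sub (z3scale (Z.of_nat j) v) r) (z3sub (z3scale (Z.of_nat i) v) r))
    by (rewrite Nat2Z.inj_sub by lia; z3ring).
  apply subgroup_sub; assumption.
Qed.

Definition periodic (x : Z3 -> bool) : Prop := inX x /\ fixed_by L x.

Definition coord (x : Z3 -> bool) (j : nat) : bool := x (nth j reps origin).

Lemma periodic_coord x m : periodic x -> x m = coord x (coset_index m).
Proof. intros [_ Hx]. apply (fixed_by_coset L); [exact Hx|apply coset_index_spec]. Qed.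

Lemma periodic_ext x y : periodic x -> periodic y ->
  (forall j, (j < n)%nat -> coord x j = coord y j) -> x = y.
Proof.
  intros Hx Hy H. apply functional_extensionality; intros m.
  rewrite (periodic_coord x m Hx), (periodic_coord y m Hy). apply H, coset_index_spec.
Qed.

Lemma Fcount_exists : exists k, Fcount L k.
Proof.
  apply (has_card_incl (map (fun bl m => nth (coset_index m) bl false) (bool_lists n))).
  intros x Hx. apply in_map_iff. exists (map (coord x) (seq 0 n)). split.
  - apply functional_extensionality; intros m. destruct (coset_index_spec m) as [Hm _].
    rewrite nth_indep with (d' := coord x 0) by (rewrite length_map, length_seq; exact Hm).
    rewrite map_nth, seq_nth by exact Hm. symmetry. apply periodic_coord, Hx.
  - apply in_bool_lists. rewrite length_map, length_seq. reflexivity.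
Qed.

Lemma periodic_coord_depends_on_two j : (j < n)%nat -> exists t, (length t <= 2)%nat /\
  ~ In j t /\ (forall z, In z t -> (z < n)%nat) /\
  forall x y, periodic x -> periodic y -> agree_on coord x y (fun z => In z t) -> coord x j = coord y j.
Proof.
  intros Hj. set (r := nth j reps origin).
  set (A := coset_index (z3add r e1)). set (B := coset_index (z3add r e2)).
  destruct (coset_index_spec (z3add r e1)) as [HA HrA].
  destruct (coset_index_spec (z3add r e2)) as [HB HrB]. fold A in HA, HrA. fold B in HB, HrB.
  destruct (classic (A = j \/ B = j)) as [HAB|HAB].
  - assert (He : L e1 = true \/ L e2 = true).
    { destruct HAB as [HA'|HB'].
      - left. rewrite HA' in HrA. fold r in HrA. rewrite z3add_sub_cancel_l in HrA. exact HrA.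
      - right. rewrite HB' in HrB. fold r in HrB. rewrite z3add_sub_cancel_l in HrB. exact HrB. }
    exists []. repeat split; [simpl; lia|intros []|intros z []|].
    intros x y [HXx Hx] [HXy Hy] _. unfold coord.
    rewrite (fixed_point_vanishes L x), (fixed_point_vanishes L y); auto.
  - exists [A; B]. split; [simpl; lia|]. split; [simpl; intuition|]. split.
    + intros z [<-|[<-|[]]]; assumption.
    + intros x y Hx Hy Hag. unfold coord at 1 2. fold r.
      rewrite (inX_xorb x r (proj1 Hx)), (inX_xorb y r (proj1 Hy)).
      rewrite !periodic_coord by assumption. fold A B.
      rewrite (Hag A), (Hag B); simpl; auto.
Qed.

Lemma Fcount_cube_le k : Fcount L k -> (k ^ 3 <= 4 ^ n)%nat.
Proof.
  intros Hk.
  destruct (few_free_coordinates _ n periodic coord periodic_coord_depends_on_two) as [F [HF Hfree]].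
  assert (Hk2 : (k <= 2 ^ length F)%nat).
  { apply (has_card_le_pow2 periodic k (fun x => map (coord x) F) (length F) Hk).
    - intros x _. apply length_map.
    - intros x y Hx Hy Heq. apply periodic_ext; [exact Hx|exact Hy|].
      apply (Hfree x y Hx Hy). exact (proj1 map_ext_in_iff Heq). }
  apply Nat.le_trans with ((2 ^ length F) ^ 3)%nat; [apply Nat.pow_le_mono_l, Hk2|].
  rewrite <- Nat.pow_mul_r. change 4%nat with (2 ^ 2)%nat. rewrite <- Nat.pow_mul_r.
  apply Nat.pow_le_mono_r; lia.
Qed.

End Cosets.

Lemma Fcount_finite L n : has_index L n -> exists k, Fcount L k.
Proof. intros [reps [Hlen [_ Hcov]]]. exact (Fcount_exists L n reps Hlen Hcov). Qed.

Lemma Fcount_cube_le_of_index L n k : has_index L n -> Fcount L k -> (k ^ 3 <= 4 ^ n)%nat.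
Proof. intros [reps [Hlen [_ Hcov]]]. exact (Fcount_cube_le L n reps Hlen Hcov k). Qed.

(** * The subgroups [Lm] realising the growth rate *)

Section Example.
Variable m : nat.
Hypothesis Hm : (1 <= m)%nat.
Let M := Z.of_nat m.
Let M_pos : (0 < M)%Z. Proof. unfold M; lia. Qed.

Definition Lm (p : Z3) : bool :=
  match p with (a, b, c) => (Z.eqb ((a - b) mod 3) 0 && Z.eqb (c mod M) 0)%bool end.

Lemma Lm_iff a b c : Lm (a, b, c) = true <-> (3 | a - b)%Z /\ (M | c)%Z.
Proof. simpl. rewrite Bool.andb_true_iff, !Z.eqb_eq, !Z.mod_divide by lia. tauto. Qed.

Lemma Lm_subgroup : is_subgroup Lm.
Proof.
  split; [|split].
  - apply Lm_iff. split; apply Z.divide_0_r.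
  - intros [[a b] c] [[d e] f] H1 H2. apply Lm_iff in H1, H2. simpl. apply Lm_iff.
    destruct H1 as [H1 H1'], H2 as [H2 H2']. split; [|apply Z.divide_add_r; assumption].
    replace (a + d - (b + e))%Z with ((a - b) + (d - e))%Z by lia. apply Z.divide_add_r; assumption.
  - intros [[a b] c] H1. apply Lm_iff in H1. simpl. apply Lm_iff. destruct H1 as [H1 H1'].
    split; [|apply Z.divide_opp_r; assumption].
    replace (- a - - b)%Z with (- (a - b))%Z by lia. apply Z.divide_opp_r; assumption.
Qed.

Definition Lm_rep (i : nat) : Z3 := (Z.of_nat (i mod 3), 0%Z, Z.of_nat (i / 3)).

Lemma Lm_reps_distinct i j : (i < 3 * m)%nat -> (j < 3 * m)%nat ->
  Lm (z3sub (Lm_rep i) (Lm_rep j)) = true -> i = j.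
Proof.
  intros Hi Hj. unfold Lm_rep, z3sub, z3add, z3opp. rewrite Lm_iff. intros [[q1 H1] [q2 H2]].
  pose proof (Nat.mod_upper_bound i 3 ltac:(lia)). pose proof (Nat.mod_upper_bound j 3 ltac:(lia)).
  assert (Hi3 : (i / 3 < m)%nat) by (apply Nat.Div0.div_lt_upper_bound; lia).
  assert (Hj3 : (j / 3 < m)%nat) by (apply Nat.Div0.div_lt_upper_bound; lia).
  assert (Hmod : (i mod 3 = j mod 3)%nat) by lia.
  assert (Hdiv : (i / 3 = j / 3)%nat) by (unfold M in H2; assert (q2 = 0%Z) by nia; lia).
  rewrite (Nat.div_mod_eq i 3), (Nat.div_mod_eq j 3). lia.
Qed.

Lemma Lm_reps_cover p : exists r, In r (map Lm_rep (seq 0 (3 * m))) /\ Lm (z3sub p r) = true.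
Proof.
  destruct p as [[a b] c].
  pose proof (Z.mod_pos_bound (a - b) 3 ltac:(lia)). pose proof (Z.mod_pos_bound c M M_pos).
  pose proof (Z.div_mod (a - b) 3 ltac:(lia)). pose proof (Z.div_mod c M ltac:(lia)).
  exists (Lm_rep (3 * Z.to_nat (c mod M) + Z.to_nat ((a - b) mod 3))). split.
  - apply in_map, in_seq. unfold M in *. lia.
  - unfold Lm_rep. rewrite Nat.mul_comm, Nat.div_add_l, Nat.add_comm, Nat.Div0.mod_add by lia.
    rewrite Nat.mod_small, Nat.div_small, Nat.add_0_r, !Z2Nat.id by lia.
    simpl. apply Lm_iff. split; [exists ((a - b) / 3)%Z|exists (c / M)%Z]; lia.
Qed.

Lemma Lm_index : has_index Lm (3 * m).
Proof.
  exists (map Lm_rep (seq 0 (3 * m))). split; [rewrite length_map, length_seq; reflexivity|].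
  split; [|exact Lm_reps_cover].
  intros i j Hi Hj. change (0%Z, 0%Z, 0%Z) with (Lm_rep 0).
  rewrite !map_nth, !seq_nth by lia. apply Lm_reps_distinct; assumption.
Qed.

(* An [Lm]-periodic point of [X] depends only on [(a - b) mod 3] and [t = c mod m]; on the
   column [t] it takes the values [p_t], [q_t], [p_t xor q_t] at the three residues. *)
Definition Lm_periodic (pq : list bool * list bool) (p : Z3) : bool :=
  match p with
  | (a, b, c) =>
      let t := Z.to_nat (c mod M) in
      let s := ((a - b) mod 3)%Z in
      if Z.eqb s 0 then nth t (fst pq) false
      else if Z.eqb s 1 then nth t (snd pq) false
      else xorb (nth t (fst pq) false) (nth t (snd pq) false)
  end.

Lemma mod3_cases d : ((d mod 3 = 0 /\ (d + 1) mod 3 = 1 /\ (d - 1) mod 3 = 2) \/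
  (d mod 3 = 1 /\ (d + 1) mod 3 = 2 /\ (d - 1) mod 3 = 0) \/
  (d mod 3 = 2 /\ (d + 1) mod 3 = 0 /\ (d - 1) mod 3 = 1))%Z.
Proof. Z.div_mod_to_equations. lia. Qed.

Lemma Lm_periodic_spec pq : inX (Lm_periodic pq) /\ fixed_by Lm (Lm_periodic pq).
Proof.
  split.
  - intros i j k. simpl.
    replace (i + 1 - j)%Z with ((i - j) + 1)%Z by lia. replace (i - (j + 1))%Z with ((i - j) - 1)%Z by lia.
    destruct (mod3_cases (i - j)) as [[-> [-> ->]]|[[-> [-> ->]]|[-> [-> ->]]]]; simpl;
    destruct (nth _ (fst pq) false), (nth _ (snd pq) false); reflexivity.
  - intros [[d e] f] Hn [[a b] c]. apply Lm_iff in Hn. destruct Hn as [[q1 H1] [q2 H2]].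
    simpl. replace (a + d - (b + e))%Z with ((a - b) + q1 * 3)%Z by lia.
    rewrite H2, Z_mod_plus_full, Z_mod_plus_full. reflexivity.
Qed.

Lemma Lm_periodic_inj pq pq' : In pq (list_prod (bool_lists m) (bool_lists m)) ->
  In pq' (list_prod (bool_lists m) (bool_lists m)) -> Lm_periodic pq = Lm_periodic pq' -> pq = pq'.
Proof.
  destruct pq as [p q], pq' as [p' q']. rewrite !in_prod_iff, !in_bool_lists.
  intros [H1 H2] [H3 H4] H.
  assert (Ht : forall t, (t < m)%nat -> Z.to_nat (Z.of_nat t mod M) = t).
  { intros t Ht. rewrite Z.mod_small by (unfold M; lia). lia. }
  f_equal; apply nth_ext with (d := false) (d' := false); try congruence; intros t Ht';
  [assert (E := f_equal (fun x => x (0%Z, 0%Z, Z.of_nat t)) H)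
  |assert (E := f_equal (fun x => x (1%Z, 0%Z, Z.of_nat t)) H)];
  simpl in E; rewrite Ht in E by congruence; exact E.
Qed.

Lemma Lm_Fcount_ge k : Fcount Lm k -> (4 ^ m <= k)%nat.
Proof.
  intros Hk. replace (4 ^ m)%nat with (length (map Lm_periodic (list_prod (bool_lists m) (bool_lists m)))).
  - apply (has_card_ge _ _ _ Hk).
    + apply NoDup_map_NoDup_ForallPairs; [exact Lm_periodic_inj|].
      apply NoDup_list_prod; apply NoDup_bool_lists.
    + intros x Hx. apply in_map_iff in Hx. destruct Hx as [pq [<- _]]. apply Lm_periodic_spec.
  - rewrite length_map, length_prod, length_bool_lists, <- Nat.pow_mul_l. reflexivity.
Qed.

End Example.

Lemma Lm_inL3 m : (1 <= m)%nat -> inL3 (Lm m).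
Proof. intros Hm. split; [apply Lm_subgroup, Hm|exists (3 * m)%nat; apply Lm_index, Hm]. Qed.

(** * Counting subgroups of given index *)

Lemma exists_least_positive (P : Z -> Prop) N : (exists z, (0 < z <= N)%Z /\ P z) ->
  exists F, (0 < F <= N)%Z /\ P F /\ forall w, (0 < w < F)%Z -> ~ P w.
Proof.
  intros [z Hz]. remember (Z.to_nat z) as k eqn:Hk. revert z Hk Hz.
  induction k as [k IH] using (well_founded_induction lt_wf). intros z Hk [Hz Pz].
  destruct (classic (exists w, (0 < w < z)%Z /\ P w)) as [[w [Hw Pw]]|Hmin].
  - apply (IH (Z.to_nat w)) with (z := w); [lia|reflexivity|split; [lia|exact Pw]].
  - exists z. split; [exact Hz|]. split; [exact Pz|]. intros w Hw Pw. apply Hmin. eauto.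
Qed.

Lemma least_positive_divides (P : Z -> Prop) F z :
  (forall u v k, P u -> P v -> P (u + k * v)%Z) -> P F -> (0 < F)%Z ->
  (forall w, (0 < w < F)%Z -> ~ P w) -> P z -> (F | z)%Z.
Proof.
  intros Hclosed PF HF Hmin Pz. apply Z.mod_divide; [lia|].
  pose proof (Z.mod_pos_bound z F HF). destruct (Z.eq_dec (z mod F) 0) as [|Hne]; [assumption|].
  exfalso. apply (Hmin (z mod F)%Z); [lia|]. rewrite Z.mod_eq by lia.
  replace (z - F * (z / F))%Z with (z + - (z / F) * F)%Z by ring. apply Hclosed; assumption.
Qed.

Definition lattice_span (a b c d e f : Z) (m : Z3) : Prop :=
  exists p q s : Z,
    m = z3add (z3add (z3scale p (a, 0%Z, 0%Z)) (z3scale q (b, c, 0%Z))) (z3scale s (d, e, f)).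

Section TriangularBasis.
Variable L : Z3 -> bool.
Hypothesis HL : is_subgroup L.

Lemma lattice_span_subgroup a b c d e f m :
  L (a, 0%Z, 0%Z) = true -> L (b, c, 0%Z) = true -> L (d, e, f) = true ->
  lattice_span a b c d e f m -> L m = true.
Proof.
  intros Ha Hb Hd [p [q [s ->]]]. apply subgroup_add; [exact HL| |apply subgroup_scale; assumption].
  apply subgroup_add; [exact HL| |]; apply subgroup_scale; assumption.
Qed.

Definition z_coords (z : Z) : Prop := exists x y, L (x, y, z) = true.
Definition y_coords_in_plane (y : Z) : Prop := exists x, L (x, y, 0%Z) = true.
Definition x_coords_on_axis (x : Z) : Prop := L (x, 0%Z, 0%Z) = true.

Lemma z_coords_closed u v k : z_coords u -> z_coords v -> z_coords (u + k * v)%Z.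
Proof.
  intros [xu [yu Hu]] [xv [yv Hv]]. exists (xu + k * xv)%Z, (yu + k * yv)%Z.
  replace (xu + k * xv, yu + k * yv, u + k * v)%Z with (z3add (xu, yu, u) (z3scale k (xv, yv, v)))
    by z3ring. apply subgroup_add_scale; assumption.
Qed.

Lemma y_coords_in_plane_closed u v k :
  y_coords_in_plane u -> y_coords_in_plane v -> y_coords_in_plane (u + k * v)%Z.
Proof.
  intros [xu Hu] [xv Hv]. exists (xu + k * xv)%Z.
  replace (xu + k * xv, u + k * v, 0)%Z with (z3add (xu, u, 0%Z) (z3scale k (xv, v, 0%Z)))
    by z3ring. apply subgroup_add_scale; assumption.
Qed.

Lemma x_coords_on_axis_closed u v k :
  x_coords_on_axis u -> x_coords_on_axis v -> x_coords_on_axis (u + k * v)%Z.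
Proof.
  unfold x_coords_on_axis. intros Hu Hv.
  replace (u + k * v, 0, 0)%Z with (z3add (u, 0%Z, 0%Z) (z3scale k (v, 0%Z, 0%Z)))
    by z3ring. apply subgroup_add_scale; assumption.
Qed.

Lemma subgroup_lattice_span a b c d e f :
  (forall x y z, L (x, y, z) = true -> (f | z)%Z) ->
  (forall x y, L (x, y, 0%Z) = true -> (c | y)%Z) ->
  (forall x, L (x, 0%Z, 0%Z) = true -> (a | x)%Z) ->
  L (b, c, 0%Z) = true -> L (d, e, f) = true ->
  forall m, L m = true -> lattice_span a b c d e f m.
Proof.
  intros Hf Hc Ha Hb Hd [[x y] z] Hm.
  destruct (Hf x y z Hm) as [s ->].
  assert (H2 : L (x - s * d, y - s * e, 0)%Z = true).
  { replace (x - s * d, y - s * e, 0)%Z with (z3add (x, y, (s * f)%Z) (z3scale (- s) (d, e, f)))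
      by z3ring. apply subgroup_add_scale; assumption. }
  destruct (Hc _ _ H2) as [q Hq].
  assert (H1 : L (x - s * d - q * b, 0, 0)%Z = true).
  { replace (x - s * d - q * b, 0, 0)%Z with (z3add (x - s * d, y - s * e, 0)%Z (z3scale (- q) (b, c, 0%Z)))
      by (rewrite Hq; z3ring). apply subgroup_add_scale; assumption. }
  destruct (Ha _ H1) as [p Hp].
  exists p, q, s. unfold z3scale, z3add. f_equal; [f_equal|]; lia.
Qed.

Section Index.
Variables (n : nat) (reps : list Z3).
Hypothesis Hlen : length reps = n.
Hypothesis Hcov : forall m, exists r, In r reps /\ L (z3sub m r) = true.

Lemma least_positive_projection (P : Z -> Prop) v :
  (forall d, L (z3scale d v) = true -> P d) ->
  exists F, (0 < F <= Z.of_nat n)%Z /\ P F /\ forall w, (0 < w < F)%Z -> ~ P w.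
Proof.
  intros Hv. apply exists_least_positive.
  destruct (subgroup_multiple_in L n reps HL Hlen Hcov v) as [d [Hd HLd]].
  exists (Z.of_nat d). split; [lia|apply Hv, HLd].
Qed.

Lemma triangular_basis : exists a b c d e f : Z,
  (0 < a <= Z.of_nat n /\ 0 <= b < a /\ 0 < c <= Z.of_nat n /\
   0 <= d < a /\ 0 <= e < c /\ 0 < f <= Z.of_nat n)%Z /\
  forall m, L m = true <-> lattice_span a b c d e f m.
Proof.
  destruct (least_positive_projection z_coords e3) as [f [Hf [[x3 [y3 Hxyf]] Hfmin]]].
  { intros d Hd. exists 0%Z, 0%Z. replace (0%Z, 0%Z, d) with (z3scale d e3) by z3ring. exact Hd. }
  destruct (least_positive_projection y_coords_in_plane e2) as [c [Hc [[x2 Hxc] Hcmin]]].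
  { intros d Hd. exists 0%Z. replace (0%Z, d, 0%Z) with (z3scale d e2) by z3ring. exact Hd. }
  destruct (least_positive_projection x_coords_on_axis e1) as [a [Ha [Ha0 Hamin]]].
  { intros d Hd. red. replace (d, 0%Z, 0%Z) with (z3scale d e1) by z3ring. exact Hd. }
  set (b := (x2 mod a)%Z). set (e := (y3 mod c)%Z). set (d := ((x3 - y3 / c * b) mod a)%Z).
  pose proof (Z.div_mod x2 a ltac:(lia)). pose proof (Z.div_mod y3 c ltac:(lia)).
  pose proof (Z.div_mod (x3 - y3 / c * b) a ltac:(lia)).
  assert (Hb : L (b, c, 0%Z) = true).
  { replace (b, c, 0%Z) with (z3add (x2, c, 0%Z) (z3scale (- (x2 / a)) (a, 0%Z, 0%Z))) by
      (unfold b, z3scale, z3add; f_equal; [f_equal|]; lia). apply subgroup_add_scale; assumption. }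
  assert (Hd : L (d, e, f) = true).
  { replace (d, e, f) with (z3add (z3add (x3, y3, f) (z3scale (- (y3 / c)) (b, c, 0%Z)))
      (z3scale (- ((x3 - y3 / c * b) / a)) (a, 0%Z, 0%Z))) by
      (unfold d, e, z3scale, z3add; f_equal; [f_equal|]; lia).
    apply subgroup_add_scale; [exact HL|apply subgroup_add_scale|]; assumption. }
  exists a, b, c, d, e, f. split.
  { pose proof (Z.mod_pos_bound x2 a). pose proof (Z.mod_pos_bound y3 c).
    pose proof (Z.mod_pos_bound (x3 - y3 / c * b) a). unfold b, e, d. lia. }
  intros m. split; [|apply lattice_span_subgroup; assumption].
  apply subgroup_lattice_span; [| | |assumption|assumption].
  - intros x y z Hm. apply (least_positive_divides z_coords); [exact z_coords_closed|
      exists x3, y3; exact Hxyf|lia|exact Hfmin|exists x, y; exact Hm].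
  - intros x y Hm. apply (least_positive_divides y_coords_in_plane); [exact y_coords_in_plane_closed|
      exists x2; exact Hxc|lia|exact Hcmin|exists x; exact Hm].
  - intros x Hm. apply (least_positive_divides x_coords_on_axis);
      [exact x_coords_on_axis_closed|exact Ha0|lia|exact Hamin|exact Hm].
Qed.

End Index.
End TriangularBasis.

Fixpoint nat_tuples (k n : nat) : list (list nat) :=
  match k with
  | O => [[]]
  | S k' => flat_map (fun i => map (cons i) (nat_tuples k' n)) (seq 0 (S n))
  end.

Lemma length_nat_tuples k n : length (nat_tuples k n) = (S n ^ k)%nat.
Proof.
  induction k as [|k IH]; [reflexivity|]. cbn [nat_tuples].
  rewrite (flat_map_constant_length (c := (S n ^ k)%nat)), length_seq; [simpl; lia|].
  intros i _. rewrite length_map. exact IH.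
Qed.

Lemma in_nat_tuples k n l : length l = k -> (forall x, In x l -> (x <= n)%nat) -> In l (nat_tuples k n).
Proof.
  revert l; induction k as [|k IH]; intros l Hl Hx; cbn [nat_tuples].
  - destruct l; [left; reflexivity|discriminate].
  - destruct l as [|i l]; [discriminate|]. apply in_flat_map. exists i. split.
    + apply in_seq. specialize (Hx i (or_introl eq_refl)). lia.
    + apply in_map, IH; [simpl in Hl; lia|]. intros x H; apply Hx; right; exact H.
Qed.

Definition triangular_lattice (pl : list nat) : Z3 -> bool := fun m =>
  let z i := Z.of_nat (nth i pl 0%nat) in
  if excluded_middle_informative (lattice_span (z 0%nat) (z 1%nat) (z 2%nat) (z 3%nat) (z 4%nat) (z 5%nat) m)
  then true else false.

Lemma index_subgroup_listed L n : inL3 L -> has_index L n -> In L (map triangular_lattice (nat_tuples 6 n)).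
Proof.
  intros [HL _] [reps [Hlen [_ Hcov]]].
  destruct (triangular_basis L HL n reps Hlen Hcov) as [a [b [c [d [e [f [Hbounds Hspan]]]]]]].
  apply in_map_iff.
  exists (map Z.to_nat [a; b; c; d; e; f]). split.
  - apply functional_extensionality. intros m. unfold triangular_lattice. simpl.
    rewrite !Z2Nat.id by lia. destruct (excluded_middle_informative _) as [H|H].
    + symmetry. apply Hspan, H.
    + destruct (L m) eqn:Em; [|reflexivity]. exfalso. apply H, Hspan, Em.
  - apply in_nat_tuples; [reflexivity|]. simpl.
    intros x [<-|[<-|[<-|[<-|[<-|[<-|[]]]]]]]; lia.
Qed.

(** * Radius of convergence of the zeta function *)

Lemma linear_times_geometric_bounded θ : 0 <= θ < 1 -> exists D, forall k, INR (S k) * θ ^ k <= D.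
Proof.
  intros Hθ. destruct (Req_dec θ 0) as [->|Hne].
  { exists 1. intros [|k]; simpl; [lra|]. rewrite Rmult_0_l, Rmult_0_r. lra. }
  set (h := / θ - 1).
  assert (Hh : 0 < h) by (unfold h; assert (1 < / θ) by (rewrite <- Rinv_1; apply Rinv_lt_contravar; lra); lra).
  assert (Hθh : θ * (1 + h) = 1) by (unfold h; field; lra).
  exists (1 + / h). intros k.
  assert (Hpow : θ ^ k * (1 + h) ^ k = 1) by (rewrite <- Rpow_mult_distr, Hθh; apply pow1).
  assert (Hpos : 0 < (1 + h) ^ k) by (apply pow_lt; lra).
  (* Bernoulli: (1 + h)^k >= 1 + k h >= (k + 1) / (1 + 1/h). *)
  assert (HS : INR (S k) <= (1 + / h) * (1 + h) ^ k).
  { pose proof (poly k h Hh). rewrite S_INR. pose proof (pos_INR k).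
    assert (0 < / h) by (apply Rinv_0_lt_compat; lra).
    assert (/ h * h = 1) by (field; lra).
    apply Rle_trans with ((1 + / h) * (1 + INR k * h)); [nra|apply Rmult_le_compat_l; lra]. }
  apply Rmult_le_reg_r with ((1 + h) ^ k); [exact Hpos|].
  rewrite Rmult_assoc, Hpow, Rmult_1_r. exact HS.
Qed.

Lemma poly_times_geometric_bounded p θ : 0 <= θ < 1 -> exists D, forall k, INR (S k) ^ p * θ ^ k <= D.
Proof.
  revert θ; induction p as [|p IH]; intros θ Hθ.
  { exists 1. intros k. rewrite pow_O, Rmult_1_l, <- (pow1 k). apply pow_incr. lra. }
  (* Split θ^k as (sqrt θ)^k (sqrt θ)^k: one factor absorbs (k+1)^p, the other (k+1). *)
  assert (Hs : 0 <= sqrt θ < 1) by (split; [apply sqrt_pos|rewrite <- sqrt_1; apply sqrt_lt_1; lra]).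
  destruct (IH (sqrt θ) Hs) as [D1 HD1]. destruct (linear_times_geometric_bounded (sqrt θ) Hs) as [D2 HD2].
  exists (D1 * D2). intros k.
  replace (INR (S k) ^ S p * θ ^ k) with ((INR (S k) ^ p * sqrt θ ^ k) * (INR (S k) * sqrt θ ^ k))
    by (rewrite <- (sqrt_sqrt θ) at 3 by lra; rewrite Rpow_mult_distr; simpl; ring).
  pose proof (pos_INR (S k)). pose proof (pow_le (sqrt θ) k (proj1 Hs)).
  apply Rmult_le_compat; [apply Rmult_le_pos; [apply pow_le|]| |apply HD1|apply HD2]; nra.
Qed.

Lemma geometric_over_linear_unbounded c M : 1 < c -> exists m, (1 <= m)%nat /\ M * INR m < c ^ m.
Proof.
  intros Hc. assert (Hθ : 0 <= / c < 1).
  { split; [left; apply Rinv_0_lt_compat; lra|rewrite <- Rinv_1; apply Rinv_lt_contravar; lra]. }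
  destruct (poly_times_geometric_bounded 2 (/ c) Hθ) as [D HD].
  assert (HD1 : 1 <= D) by (specialize (HD 0%nat); simpl in HD; lra).
  destruct (INR_archimed 1 (D * M)) as [m Hm]; [lra|]. rewrite Rmult_1_r in Hm.
  exists (S m). split; [lia|].
  assert (Hcm : INR (S (S m)) ^ 2 <= D * c ^ S m).
  { specialize (HD (S m)). rewrite pow_inv in HD. assert (0 < c ^ S m) by (apply pow_lt; lra).
    apply Rmult_le_compat_r with (r := c ^ S m) in HD; [|lra].
    rewrite Rmult_assoc, Rinv_l, Rmult_1_r in HD by lra. exact HD. }
  rewrite S_INR, S_INR in Hcm. rewrite S_INR. pose proof (pos_INR m).
  apply Rmult_lt_reg_l with D; [lra|].
  assert (D * M * (INR m + 1) < INR m * (INR m + 1)) by (apply Rmult_lt_compat_r; lra).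
  assert (INR m * (INR m + 1) <= (INR m + 1 + 1) ^ 2) by (simpl; nra).
  rewrite <- Rmult_assoc. lra.
Qed.

Lemma sum_pow_succ_le q n : 0 <= q < 1 -> sum_f_R0 (fun j => q ^ S j) n <= q / (1 - q).
Proof.
  intros Hq. replace (sum_f_R0 (fun j => q ^ S j) n) with (q * sum_f_R0 (fun j => q ^ j) n)
    by (rewrite scal_sum; apply sum_eq; intros; simpl; ring).
  rewrite tech3 by lra. unfold Rdiv. apply Rmult_le_compat_l; [lra|].
  pose proof (pow_le q (S n) (proj1 Hq)). assert (0 < / (1 - q)) by (apply Rinv_0_lt_compat; lra).
  nra.
Qed.

Lemma sum_f_R0_ge_term (f : nat -> R) N i : (forall j, 0 <= f j) -> (i <= N)%nat -> f i <= sum_f_R0 f N.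
Proof.
  intros Hf Hi. induction N as [|N IH].
  - replace i with 0%nat by lia. simpl. lra.
  - rewrite tech5. destruct (Nat.eq_dec i (S N)) as [->|Hne].
    + pose proof (cond_pos_sum f N Hf). lra.
    + specialize (IH ltac:(lia)). specialize (Hf (S N)). lra.
Qed.

Lemma series_cv_geometric_bound (u : nat -> R) E x : 0 <= x < 1 ->
  (forall n, 0 <= u n <= E * x ^ n) -> exists s, Un_cv (fun N => sum_f_R0 u N) s.
Proof.
  intros Hx Hu. destruct (growing_cv (fun N => sum_f_R0 u N)) as [s Hs]; [| |exists s; exact Hs].
  - intros N. simpl. specialize (Hu (S N)). lra.
  - exists (E / (1 - x)). intros y [N ->].
    apply Rle_trans with (E * sum_f_R0 (fun n => x ^ n) N).
    + rewrite scal_sum. apply sum_Rle. intros n _. rewrite Rmult_comm. apply Hu.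
    + assert (HE : 0 <= E) by (specialize (Hu 0%nat); simpl in Hu; lra).
      rewrite tech3 by lra. pose proof (pow_le x (S N) (proj1 Hx)).
      assert (0 < / (1 - x)) by (apply Rinv_0_lt_compat; lra). unfold Rdiv.
      apply Rmult_le_compat_l; [exact HE|]. rewrite <- (Rmult_1_l (/ (1 - x))) at 2.
      apply Rmult_le_compat_r; lra.
Qed.

Lemma expc_0 a : expc a 0 = 1.
Proof. reflexivity. Qed.

Lemma nth_expc_list a n j : (j <= n)%nat -> nth j (expc_list a n) 0 = expc a (n - j).
Proof.
  revert j; induction n as [|n IH]; intros j Hj.
  - replace j with 0%nat by lia. reflexivity.
  - destruct j as [|j]; [reflexivity|]. apply IH. lia.
Qed.

Lemma expc_succ a n :
  INR (S n) * expc a (S n) = sum_f_R0 (fun j => INR (S j) * a (S j) * expc a (n - j)) n.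
Proof.
  change (expc a (S n)) with
    (sum_f_R0 (fun j => INR (S j) * a (S j) * nth j (expc_list a n) 0) n / INR (S n)).
  field_simplify; [|apply not_0_INR; lia]. apply sum_eq. intros j Hj. rewrite nth_expc_list by lia. reflexivity.
Qed.

Section ExpCoefficients.
Variable a : nat -> R.
Hypothesis a_nonneg : forall n, (1 <= n)%nat -> 0 <= a n.

Lemma expc_nonneg n : 0 <= expc a n.
Proof.
  induction n as [n IH] using (well_founded_induction lt_wf).
  destruct n as [|n]; [rewrite expc_0; lra|].
  apply Rmult_le_reg_l with (INR (S n)); [apply lt_0_INR; lia|]. rewrite Rmult_0_r, expc_succ.
  apply cond_pos_sum. intros j. pose proof (pos_INR (S j)). pose proof (a_nonneg (S j) ltac:(lia)).
  pose proof (IH (n - j)%nat ltac:(lia)). apply Rmult_le_pos; [apply Rmult_le_pos|]; assumption.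
Qed.

Lemma expc_ge_coef n : (1 <= n)%nat -> a n <= expc a n.
Proof.
  intros Hn. destruct n as [|n]; [lia|].
  apply Rmult_le_reg_l with (INR (S n)); [apply lt_0_INR; lia|]. rewrite expc_succ.
  replace (INR (S n) * a (S n)) with (INR (S n) * a (S n) * expc a (n - n)%nat)
    by (rewrite Nat.sub_diag, expc_0; ring).
  apply sum_f_R0_ge_term with (f := fun j => INR (S j) * a (S j) * expc a (n - j)); [|lia].
  intros j. pose proof (pos_INR (S j)). pose proof (a_nonneg (S j) ltac:(lia)).
  pose proof (expc_nonneg (n - j)). apply Rmult_le_pos; [apply Rmult_le_pos|]; assumption.
Qed.

Lemma expc_step_bound D τ σ E n : 0 < τ -> 0 < σ ->
  (forall k, (1 <= k)%nat -> INR k * a k <= D * τ ^ k) ->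
  (forall m, (m <= n)%nat -> expc a m <= E * σ ^ m) ->
  INR (S n) * expc a (S n) <= E * σ ^ S n * (D * sum_f_R0 (fun j => (τ / σ) ^ S j) n).
Proof.
  intros Hτ Hσ Ha HE. rewrite expc_succ, scal_sum, scal_sum. apply sum_Rle. intros j Hj.
  apply Rle_trans with (D * τ ^ S j * (E * σ ^ (n - j))).
  - pose proof (pos_INR (S j)). pose proof (a_nonneg (S j) ltac:(lia)).
    apply Rmult_le_compat; [apply Rmult_le_pos; assumption|apply expc_nonneg|apply Ha; lia|apply HE; lia].
  - right. replace (σ ^ S n) with (σ ^ S j * σ ^ (n - j)) by (rewrite <- pow_add; f_equal; lia).
    unfold Rdiv. rewrite Rpow_mult_distr, pow_inv. field. apply pow_nonzero. lra.
Qed.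

(* Strong induction: beyond [n0] the recursion loses the factor [D q / (1 - q) < n + 1];
   the finitely many earlier terms are absorbed into [E]. *)
Lemma expc_geometric_bound D τ σ : 0 < τ < σ ->
  (forall k, (1 <= k)%nat -> INR k * a k <= D * τ ^ k) ->
  exists E, forall n, expc a n <= E * σ ^ n.
Proof.
  intros Hτσ Ha. set (q := τ / σ).
  assert (Hq : 0 < q < 1).
  { unfold q. split; [apply Rdiv_lt_0_compat; lra|]. apply Rmult_lt_reg_r with σ; [lra|].
    unfold Rdiv. rewrite Rmult_assoc, Rinv_l by lra. lra. }
  assert (HD : 0 <= D).
  { specialize (Ha 1%nat (le_n 1)). pose proof (a_nonneg 1%nat (le_n 1)). simpl in Ha. nra. }
  destruct (INR_archimed 1 (D * q / (1 - q))) as [n0 Hn0]; [lra|]. rewrite Rmult_1_r in Hn0.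
  set (E := 1 + sum_f_R0 (fun i => expc a i / σ ^ i) n0).
  assert (Hterm : forall i, 0 <= expc a i / σ ^ i).
  { intros i. apply Rmult_le_pos; [apply expc_nonneg|left; apply Rinv_0_lt_compat, pow_lt; lra]. }
  assert (HE : 0 <= E) by (pose proof (cond_pos_sum _ n0 Hterm); unfold E; lra).
  exists E. intros n. induction n as [n IH] using (well_founded_induction lt_wf).
  assert (Hσn : 0 < σ ^ n) by (apply pow_lt; lra).
  destruct (le_lt_dec n n0) as [Hle|Hlt].
  - pose proof (sum_f_R0_ge_term _ n0 n Hterm Hle) as Hn.
    apply Rmult_le_reg_r with (/ σ ^ n); [apply Rinv_0_lt_compat; lra|].
    rewrite Rmult_assoc, Rinv_r, Rmult_1_r by lra. unfold E. unfold Rdiv in Hn. lra.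
  - destruct n as [|n]; [lia|].
    pose proof (expc_step_bound D τ σ E n (proj1 Hτσ) ltac:(lra) Ha
      (fun m Hm => IH m ltac:(lia))) as Hstep. fold q in Hstep.
    pose proof (sum_pow_succ_le q n ltac:(lra)) as Hgeo.
    assert (HN : D * q / (1 - q) <= INR (S n)) by (pose proof (le_INR n0 (S n) ltac:(lia)); lra).
    assert (HES : 0 <= E * σ ^ S n) by (apply Rmult_le_pos; [exact HE|apply pow_le; lra]).
    apply Rmult_le_reg_l with (INR (S n)); [apply lt_0_INR; lia|].
    apply Rle_trans with (1 := Hstep). rewrite (Rmult_comm (INR (S n))).
    apply Rmult_le_compat_l; [exact HES|]. unfold Rdiv in HN, Hgeo.
    apply Rle_trans with (D * (q * / (1 - q))); [apply Rmult_le_compat_l; assumption|].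
    rewrite <- Rmult_assoc. exact HN.
Qed.

End ExpCoefficients.

Section Radius.
Variables (a : nat -> R) (ρ : R).
Hypothesis ρ_pos : 0 < ρ.
Hypothesis a_nonneg : forall n, (1 <= n)%nat -> 0 <= a n.
Hypothesis a_upper : forall n, (1 <= n)%nat -> INR n * a n <= INR (S n) ^ 6 * ρ ^ n.
Hypothesis a_lower : forall m, (1 <= m)%nat -> ρ ^ (3 * m) / INR (3 * m) <= a (3 * m)%nat.

Lemma expc_upper σ : ρ < σ -> exists E, forall n, expc a n <= E * σ ^ n.
Proof.
  intros Hσ. set (τ := (ρ + σ) / 2).
  assert (Hθ : 0 <= ρ / τ < 1).
  { unfold τ. split; [apply Rlt_le, Rdiv_lt_0_compat; lra|].
    apply Rmult_lt_reg_r with ((ρ + σ) / 2); [lra|]. field_simplify; lra. }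
  destruct (poly_times_geometric_bounded 6 (ρ / τ) Hθ) as [D HD].
  apply (expc_geometric_bound a a_nonneg D τ σ); [unfold τ; lra|].
  intros k Hk. apply Rle_trans with (1 := a_upper k Hk).
  replace (ρ ^ k) with ((ρ / τ) ^ k * τ ^ k) by (rewrite <- Rpow_mult_distr; f_equal; field; unfold τ; lra).
  rewrite <- Rmult_assoc. apply Rmult_le_compat_r; [apply pow_le; unfold τ; lra|apply HD].
Qed.

Lemma expc_series_cv r : 0 <= r < / ρ ->
  exists s, Un_cv (fun N => sum_f_R0 (fun n => Rabs (expc a n) * r ^ n) N) s.
Proof.
  intros Hr. assert (Hrρ : r * ρ < 1).
  { replace 1 with (/ ρ * ρ) by (field; lra). apply Rmult_lt_compat_r; lra. }
  set (σ := 2 * ρ / (1 + r * ρ)).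
  assert (Hσ : ρ < σ).
  { unfold σ. apply Rmult_lt_reg_r with (1 + r * ρ); [nra|]. field_simplify; nra. }
  assert (Hσr : 0 <= σ * r < 1).
  { unfold σ. split; [apply Rmult_le_pos; [apply Rlt_le, Rdiv_lt_0_compat|]; nra|].
    apply Rmult_lt_reg_r with (1 + r * ρ); [nra|]. field_simplify; nra. }
  destruct (expc_upper σ Hσ) as [E HE].
  apply (series_cv_geometric_bound _ E (σ * r) Hσr). intros n.
  rewrite Rabs_pos_eq by (apply expc_nonneg, a_nonneg). split.
  - apply Rmult_le_pos; [apply expc_nonneg, a_nonneg|apply pow_le; lra].
  - rewrite Rpow_mult_distr, <- Rmult_assoc. apply Rmult_le_compat_r; [apply pow_le; lra|apply HE].
Qed.

Lemma expc_unbounded r : / ρ < r -> ~ exists M, forall n, Rabs (expc a n) * r ^ n <= M.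
Proof.
  intros Hr [M HM]. assert (Hr0 : 0 < r) by (pose proof (Rinv_0_lt_compat ρ ρ_pos); lra).
  assert (Hrρ : 1 < ρ * r).
  { replace 1 with (ρ * / ρ) by (field; lra). apply Rmult_lt_compat_l; lra. }
  assert (Hc : 1 < (ρ * r) ^ 3) by (apply Rlt_pow_R1; [exact Hrρ|lia]).
  destruct (geometric_over_linear_unbounded ((ρ * r) ^ 3) (3 * M) Hc) as [m [Hm Hlt]].
  specialize (HM (3 * m)%nat). rewrite Rabs_pos_eq in HM by (apply expc_nonneg, a_nonneg).
  assert (Hm3 : 0 < INR (3 * m)) by (apply lt_0_INR; lia).
  assert (Hbig : ρ ^ (3 * m) / INR (3 * m) * r ^ (3 * m) <= M).
  { apply Rle_trans with (2 := HM). apply Rmult_le_compat_r; [apply pow_le; lra|].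
    apply Rle_trans with (1 := a_lower m Hm), expc_ge_coef; [exact a_nonneg|lia]. }
  rewrite <- pow_mult, Rpow_mult_distr in Hlt.
  replace (INR (3 * m)) with (3 * INR m) in Hbig by (rewrite mult_INR; simpl; ring).
  assert (ρ ^ (3 * m) * r ^ (3 * m) <= M * (3 * INR m)); [|nra].
  apply (Rmult_le_compat_r (3 * INR m)) in Hbig; [|rewrite mult_INR in Hm3; simpl in Hm3; lra].
  replace (ρ ^ (3 * m) / (3 * INR m) * r ^ (3 * m) * (3 * INR m)) with (ρ ^ (3 * m) * r ^ (3 * m))
    in Hbig by (field; apply not_0_INR; lia).
  exact Hbig.
Qed.

Lemma expc_radius : is_radius (expc a) (/ ρ).
Proof.
  split; [left; apply Rinv_0_lt_compat, ρ_pos|].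
  split; [exact expc_series_cv|exact expc_unbounded].
Qed.

End Radius.

Lemma ln_0 : ln 0 = 0.
Proof. unfold ln. case (Rlt_dec 0 0); intros H; [exfalso; exact (Rlt_irrefl 0 H)|reflexivity]. Qed.

Lemma ln_le x y : 0 < x -> x <= y -> ln x <= ln y.
Proof. intros Hx [H|H]; [left; apply ln_increasing; lra|right; rewrite H; reflexivity]. Qed.

Lemma ln_2_pos : 0 < ln 2.
Proof. rewrite <- ln_1. apply ln_increasing; lra. Qed.

Lemma ln_INR_le k p q : (k ^ p <= 2 ^ q)%nat -> INR p * ln (INR k) <= INR q * ln 2.
Proof.
  intros Hk. pose proof ln_2_pos. pose proof (pos_INR p). pose proof (pos_INR q).
  destruct k as [|k]; [change (INR 0) with 0; rewrite ln_0; nra|].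
  apply le_INR in Hk. rewrite !pow_INR in Hk. simpl (INR 2) in Hk.
  rewrite <- !ln_pow by (try apply lt_0_INR; lia || lra). apply ln_le; [|exact Hk].
  apply pow_lt, lt_0_INR. lia.
Qed.

Lemma ln_INR_ge k q : (2 ^ q <= k)%nat -> INR q * ln 2 <= ln (INR k).
Proof.
  intros Hk. apply le_INR in Hk. rewrite pow_INR in Hk. simpl (INR 2) in Hk.
  rewrite <- ln_pow by lra. apply ln_le; [apply pow_lt; lra|exact Hk].
Qed.

Lemma pow3_le_reg x y : 0 <= x -> 0 <= y -> x ^ 3 <= y ^ 3 -> x <= y.
Proof.
  intros Hx Hy H. destruct (Rle_lt_dec x y) as [|Hl]; [assumption|]. exfalso.
  assert (y ^ 3 < x ^ 3); [|lra].
  simpl. rewrite !Rmult_1_r. assert (y * y <= x * x) by nra.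
  apply Rle_lt_trans with (y * (x * x)); [apply Rmult_le_compat_l; lra|].
  apply Rmult_lt_compat_r; nra.
Qed.

Definition ρ := Rpower 2 (2 / 3).

Lemma ρ_pos : 0 < ρ.
Proof. apply exp_pos. Qed.

Lemma ρ_cube : ρ ^ 3 = 4.
Proof.
  unfold ρ. rewrite <- Rpower_pow by apply exp_pos. rewrite Rpower_mult.
  replace (2 / 3 * INR 3) with (INR 2) by (simpl; field). rewrite Rpower_pow by lra. simpl; ring.
Qed.

Lemma Fcount_le_ρ_pow L n k : has_index L n -> Fcount L k -> INR k <= ρ ^ n.
Proof.
  intros Hi Hk.
  apply pow3_le_reg; [apply pos_INR|apply pow_le, Rlt_le, ρ_pos|].
  rewrite <- pow_mult, Nat.mul_comm, pow_mult, ρ_cube, <- pow_INR.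
  replace 4 with (INR 4) by (simpl; ring). rewrite <- pow_INR.
  apply le_INR, (Fcount_cube_le_of_index L n k Hi Hk).
Qed.

Definition zcoef_sum (n : nat) (l : list ((Z3 -> bool) * nat)) : R :=
  fold_right (fun p s => INR (snd p) / INR n + s) 0 l.

Lemma zcoef_sum_nonneg n l : (1 <= n)%nat -> 0 <= zcoef_sum n l.
Proof.
  intros Hn. assert (0 < INR n) by (apply lt_0_INR; lia).
  induction l as [|p l IH]; simpl; [lra|]. fold (zcoef_sum n l).
  pose proof (pos_INR (snd p)). assert (0 <= INR (snd p) / INR n) by (apply Rle_mult_inv_pos; lra). lra.
Qed.

Lemma zcoef_sum_le n l B : (1 <= n)%nat -> (forall p, In p l -> INR (snd p) <= B) ->
  INR n * zcoef_sum n l <= INR (length l) * B.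
Proof.
  intros Hn. assert (0 < INR n) by (apply lt_0_INR; lia).
  induction l as [|p l IH]; intros HB; [simpl; lra|]. simpl (zcoef_sum n (p :: l)). fold (zcoef_sum n l).
  rewrite length_cons, S_INR, Rmult_plus_distr_l.
  replace (INR n * (INR (snd p) / INR n)) with (INR (snd p)) by (field; lra).
  specialize (IH (fun q Hq => HB q (or_intror Hq))). specialize (HB p (or_introl eq_refl)). lra.
Qed.

Lemma zcoef_sum_ge_term n l p : (1 <= n)%nat -> In p l -> INR (snd p) / INR n <= zcoef_sum n l.
Proof.
  intros Hn. induction l as [|q l IH]; intros Hp; [destruct Hp|]. simpl. fold (zcoef_sum n l).
  pose proof (zcoef_sum_nonneg n l Hn). assert (0 < INR n) by (apply lt_0_INR; lia).
  destruct Hp as [->|Hp]; [lra|]. specialize (IH Hp).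
  pose proof (pos_INR (snd q)). assert (0 <= INR (snd q) / INR n) by (apply Rle_mult_inv_pos; lra). lra.
Qed.

Lemma zcoef_exists n : exists c, zcoef n c.
Proof.
  destruct (has_card_incl (map triangular_lattice (nat_tuples 6 n)) (fun L => inL3 L /\ has_index L n))
    as [k0 [l0 [Hnodup [_ Hl0]]]].
  { intros L [HL Hi]. apply index_subgroup_listed; assumption. }
  set (F := fun L => match excluded_middle_informative (exists k, Fcount L k) with
                     | left H => proj1_sig (constructive_indefinite_description _ H)
                     | right _ => 0%nat end).
  exists (zcoef_sum n (map (fun L => (L, F L)) l0)), (map (fun L => (L, F L)) l0).
  rewrite map_map. simpl. rewrite map_id.
  split; [exact Hnodup|]. split; [exact Hl0|]. split; [|reflexivity].
  intros p Hp. apply in_map_iff in Hp. destruct Hp as [L [<- HL]]. simpl.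
  apply Hl0 in HL. destruct HL as [_ HL]. unfold F.
  destruct (excluded_middle_informative _) as [H|H].
  - exact (proj2_sig (constructive_indefinite_description _ H)).
  - exfalso. exact (H (Fcount_finite L n HL)).
Qed.

Lemma Fcount_log_ratio_le L n k : (1 <= n)%nat -> has_index L n -> Fcount L k ->
  ln (INR k) / INR n <= 2 / 3 * ln 2.
Proof.
  intros Hn Hi Hk. pose proof (Fcount_cube_le_of_index L n k Hi Hk) as Hcube.
  replace (4 ^ n)%nat with (2 ^ (2 * n))%nat in Hcube by (rewrite Nat.pow_mul_r; reflexivity).
  apply ln_INR_le in Hcube. rewrite mult_INR in Hcube. simpl (INR 2) in Hcube. simpl (INR 3) in Hcube.
  assert (0 < INR n) by (apply lt_0_INR; lia).
  apply Rmult_le_reg_r with (3 * INR n); [lra|]. field_simplify; lra.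
Qed.

Lemma Lm_log_ratio_ge m k : (1 <= m)%nat -> Fcount (Lm m) k ->
  2 / 3 * ln 2 <= ln (INR k) / INR (3 * m).
Proof.
  intros Hm Hk. pose proof (Lm_Fcount_ge m Hm k Hk) as Hge.
  replace (4 ^ m)%nat with (2 ^ (2 * m))%nat in Hge by (rewrite Nat.pow_mul_r; reflexivity).
  apply ln_INR_ge in Hge. rewrite mult_INR in Hge |- *. simpl (INR 2) in Hge. simpl (INR 3).
  assert (0 < INR m) by (apply lt_0_INR; lia).
  apply Rmult_le_reg_r with (3 * INR m); [lra|]. field_simplify; lra.
Qed.

Lemma zcoef_bounds n c : (1 <= n)%nat -> zcoef n c -> 0 <= c /\ INR n * c <= INR (S n) ^ 6 * ρ ^ n.
Proof.
  intros Hn [l [Hnodup [Hl [HF ->]]]]. split; [apply zcoef_sum_nonneg, Hn|].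
  apply Rle_trans with (INR (length l) * ρ ^ n).
  - apply zcoef_sum_le; [exact Hn|]. intros p Hp.
    destruct (proj2 (Hl (fst p)) (in_map fst l p Hp)) as [_ Hi].
    exact (Fcount_le_ρ_pow _ _ _ Hi (HF p Hp)).
  - apply Rmult_le_compat_r; [apply pow_le, Rlt_le, ρ_pos|].
    rewrite <- pow_INR. apply le_INR.
    rewrite <- length_nat_tuples, <- (length_map fst l), <- (length_map triangular_lattice (nat_tuples 6 n)).
    apply NoDup_incl_length; [exact Hnodup|]. intros L HL. apply Hl in HL.
    apply index_subgroup_listed; apply HL.
Qed.

Lemma zcoef_lower m c : (1 <= m)%nat -> zcoef (3 * m) c -> ρ ^ (3 * m) / INR (3 * m) <= c.
Proof.
  intros Hm [l [_ [Hl [HF ->]]]].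
  assert (Hin : In (Lm m) (map fst l)) by (apply Hl; split; [apply Lm_inL3|apply Lm_index]; exact Hm).
  apply in_map_iff in Hin. destruct Hin as [p [Hp Hpl]].
  apply Rle_trans with (INR (snd p) / INR (3 * m)); [|apply zcoef_sum_ge_term; [lia|exact Hpl]].
  apply Rmult_le_compat_r; [apply Rlt_le, Rinv_0_lt_compat, lt_0_INR; lia|].
  rewrite pow_mult, ρ_cube. replace 4 with (INR 4) by (simpl; ring). rewrite <- pow_INR.
  apply le_INR, (Lm_Fcount_ge m Hm). rewrite <- Hp. apply HF, Hpl.
Qed.

Theorem mainTheorem11 :
  (* F_alpha(L) is finite for every L in L_3 *)
  (forall L n, inL3 L -> has_index L n -> exists k, Fcount L k) /\
  (* g(alpha) = limsup_{[L] -> oo} (1/[L]) log F_alpha(L) = (2/3) log 2 *)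
  (forall eps, 0 < eps -> exists N : nat,
     forall L n k, inL3 L -> has_index L n -> (N <= n)%nat -> Fcount L k ->
       ln (INR k) / INR n <= 2 / 3 * ln 2 + eps) /\
  (forall eps, 0 < eps -> forall N : nat, exists L n k,
     inL3 L /\ has_index L n /\ (N <= n)%nat /\ Fcount L k /\
       2 / 3 * ln 2 - eps <= ln (INR k) / INR n) /\
  (* the zeta function is well defined and has radius of convergence 2^(-2/3) *)
  (forall n, (1 <= n)%nat -> exists c, zcoef n c) /\
  (forall a : nat -> R, (forall n, (1 <= n)%nat -> zcoef n (a n)) ->
     is_radius (expc a) (Rpower 2 (- (2 / 3)))).
Proof.
  split; [|split; [|split; [|split]]].
  - intros L n _. apply Fcount_finite.
  - intros eps Heps. exists 1%nat. intros L n k _ Hi Hn Hk.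
    pose proof (Fcount_log_ratio_le L n k Hn Hi Hk). lra.
  - intros eps Heps N. pose proof (Lm_index (S N) ltac:(lia)) as Hi.
    destruct (Fcount_finite _ _ Hi) as [k Hk].
    exists (Lm (S N)), (3 * S N)%nat, k.
    split; [apply Lm_inL3; lia|]. split; [exact Hi|]. split; [lia|]. split; [exact Hk|].
    pose proof (Lm_log_ratio_ge (S N) k ltac:(lia) Hk). lra.
  - intros n _. apply zcoef_exists.
  - intros a Ha. rewrite Rpower_Ropp. apply expc_radius; [exact ρ_pos|..];
      intros n Hn; [apply (zcoef_bounds n)|apply (zcoef_bounds n)|apply zcoef_lower]; auto.
    apply Ha. lia.
Qed.
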